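(* Let $n\ge0$ be an integer with $\chi_n>c^2$, and let $x_1$ be the minimal root of $\psi_n$ in $(1,\infty)$. Then $$x_1-\frac{\sqrt{\chi_n}}{c}>\frac{\pi}{2c}\qquad\text{and}\qquad\sqrt{\frac{x_1^2-1}{x_1^2-\chi_n/c^2}}<\frac{2}{\pi}\,c\Big(x_1-\frac{\sqrt{\chi_n}}{c}\Big).$$
   Context: For a real number $c>0$, let $\psi_0,\psi_1,\dots$ be the prolate spheroidal wave functions of band limit $c$: the real $L^2[-1,1]$-normalized eigenfunctions of $F_c[\varphi](x)=\int_{-1}^1\varphi(t)e^{icxt}\,dt$ with eigenvalues $\lambda_n$ ordered by $|\lambda_n|\ge|\lambda_{n+1}|$, extended to entire functions by $\lambda_n\psi_n(x)=\int_{-1}^1\psi_n(t)e^{icxt}\,dt$. $\chi_0<\chi_1<\dots$ are the positive numbers such that $\psi_n$ satisfies $(1-x^2)\psi''(x)-2x\psi'(x)+(\chi_n-c^2x^2)\psi(x)=0$ for all $x$. (Each $\psi_n$ has infinitely many roots in $(1,\infty)$.) *)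

From Stdlib Require Import Reals.
From Coquelicot Require Import Coquelicot.
Open Scope R_scope.

Definition fourier_kernel (c x t : R) : C := (cos (c * x * t), sin (c * x * t)).

Definition is_Fc_eigenpair (c : R) (phi : R -> R) (mu : C) : Prop :=
  forall x, -1 <= x <= 1 ->
    is_RInt (fun t => Cmult (RtoC (phi t)) (fourier_kernel c x t)) (-1) 1
            (Cmult mu (RtoC (phi x))).

(* (psi, lam) is the sequence of prolate spheroidal wave functions of band
   limit c with their eigenvalues:
   - each psi n is real, L^2[-1,1]-normalized, and the psi n are orthogonal;
   - lam n * psi n x = int_{-1}^1 psi n t e^{icxt} dt for ALL real x
     (eigen-equation on [-1,1] and the entire extension outside);
   - |lam n| >= |lam (n+1)|;
   - the sequence exhausts the (real) eigenfunctions of F_c: every real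
     eigenfunction with nonzero eigenvalue is a multiple of some psi n. *)
Definition is_PSWF_family (c : R) (psi : nat -> R -> R) (lam : nat -> C) : Prop :=
  (forall n, is_RInt (fun t => psi n t ^ 2) (-1) 1 1) /\
  (forall m n, m <> n -> is_RInt (fun t => psi m t * psi n t) (-1) 1 0) /\
  (forall n x,
     is_RInt (fun t => Cmult (RtoC (psi n t)) (fourier_kernel c x t)) (-1) 1
             (Cmult (lam n) (RtoC (psi n x)))) /\
  (forall n, Cmod (lam (S n)) <= Cmod (lam n)) /\
  (forall (phi : R -> R) (mu : C), mu <> RtoC 0 ->
     is_Fc_eigenpair c phi mu ->
     (exists x, -1 <= x <= 1 /\ phi x <> 0) ->
     exists n a, forall x, -1 <= x <= 1 -> phi x = a * psi n x).

Definition satisfies_prolate_ode (c chi : R) (f : R -> R) : Prop :=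
  forall x, ex_derive f x /\ ex_derive (Derive f) x /\
    (1 - x ^ 2) * Derive_n f 2 x - 2 * x * Derive f x + (chi - c ^ 2 * x ^ 2) * f x = 0.

(* Write x0 = sqrt chi / c > 1 for the turning point of the prolate equation, which in
   self-adjoint form reads ((x^2 - 1) v')' = (chi - c^2 x^2) v.  On (1, x0] the right-hand side
   has the sign of v, so a positive solution v vanishing first at x1 cannot have turned
   downward before x0: x0 < x1 and v'(x0) >= 0.  On [x0, x1] the solution is compared
   (Sturm) with u(x) = cos(w (x - x0)), where the frequency w = c r,
   r^2 = (x1^2 - x0^2) / (x1^2 - 1) < 1, makes the comparison coefficient
   chi - c^2 x^2 + (x^2 - 1) w^2 nonnegative on [x0, x1].  If x1 came before the first zero
   x0 + pi / (2 w) of u, the Wronskian (x^2 - 1)(v' u - v u') would force v'(x1) > 0, which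
   is impossible at the first root of a positive function.  Hence x1 - x0 > pi / (2 c r),
   which gives both inequalities since r < 1. *)

From Stdlib Require Import Reals Lra Psatz.
From Coquelicot Require Import Coquelicot.
Open Scope R_scope.

Definition turning_point (c chi : R) : R := sqrt chi / c.

Definition root_ratio (x0 x1 : R) : R := sqrt ((x1 ^ 2 - x0 ^ 2) / (x1 ^ 2 - 1)).

Lemma turning_point_sqr (c chi : R) : 0 < c -> 0 <= chi ->
  c ^ 2 * turning_point c chi ^ 2 = chi.
Proof.
  intros Hc Hchi. unfold turning_point, Rdiv.
  rewrite Rpow_mult_distr, pow2_sqrt, pow_inv by lra. field. lra.
Qed.

Lemma turning_point_gt1 (c chi : R) : 0 < c -> c ^ 2 < chi -> 1 < turning_point c chi.
Proof.
  intros Hc Hchi.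
  pose proof (turning_point_sqr c chi Hc ltac:(nra)) as Hsqr.
  assert (0 < turning_point c chi).
  { apply Rdiv_lt_0_compat; [apply sqrt_lt_R0; nra | lra]. }
  destruct (Rlt_or_le 1 (turning_point c chi)) as [|Hle]; [assumption|].
  assert (turning_point c chi ^ 2 <= 1) by nra.
  nra.
Qed.

Lemma root_ratio_sqr (x0 x1 : R) : 1 < x0 < x1 ->
  root_ratio x0 x1 ^ 2 * (x1 ^ 2 - 1) = x1 ^ 2 - x0 ^ 2.
Proof.
  intros Hx. unfold root_ratio.
  rewrite pow2_sqrt; [field; nra | apply Rlt_le, Rdiv_lt_0_compat; nra].
Qed.

Lemma root_ratio_bounds (x0 x1 : R) : 1 < x0 < x1 -> 0 < root_ratio x0 x1 < 1.
Proof.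
  intros Hx. pose proof (root_ratio_sqr x0 x1 Hx).
  assert (0 < root_ratio x0 x1) by (apply sqrt_lt_R0, Rdiv_lt_0_compat; nra).
  assert (root_ratio x0 x1 ^ 2 < 1).
  { apply Rmult_lt_reg_r with (x1 ^ 2 - 1); nra. }
  split; [assumption | nra].
Qed.

(* The frequency c * root_ratio x0 x1 is chosen so that this coefficient vanishes at x1. *)
Lemma comparison_coefficient_nonneg (c x0 x1 e : R) : 1 < x0 < x1 -> x0 <= e <= x1 ->
  0 <= c ^ 2 * x0 ^ 2 - c ^ 2 * e ^ 2 + (e ^ 2 - 1) * (c * root_ratio x0 x1) ^ 2.
Proof.
  intros Hx He. pose proof (root_ratio_sqr x0 x1 Hx) as Hr.
  assert (Hfactor : (c ^ 2 * x0 ^ 2 - c ^ 2 * e ^ 2 + (e ^ 2 - 1) * (c * root_ratio x0 x1) ^ 2)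
                    * (x1 ^ 2 - 1) = c ^ 2 * (x0 ^ 2 - 1) * (x1 ^ 2 - e ^ 2)).
  { replace ((c ^ 2 * x0 ^ 2 - c ^ 2 * e ^ 2 + (e ^ 2 - 1) * (c * root_ratio x0 x1) ^ 2)
             * (x1 ^ 2 - 1))
      with (c ^ 2 * x0 ^ 2 * (x1 ^ 2 - 1) - c ^ 2 * e ^ 2 * (x1 ^ 2 - 1)
            + (e ^ 2 - 1) * c ^ 2 * (root_ratio x0 x1 ^ 2 * (x1 ^ 2 - 1))) by ring.
    rewrite Hr. ring. }
  assert (0 <= c ^ 2 * (x0 ^ 2 - 1) * (x1 ^ 2 - e ^ 2)).
  { apply Rmult_le_pos; [apply Rmult_le_pos|]; nra. }
  apply Rmult_le_reg_r with (x1 ^ 2 - 1); [nra|].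
  rewrite Rmult_0_l, Hfactor. assumption.
Qed.

Lemma root_bounds_of_quarter_period (c x0 x1 : R) : 0 < c -> 1 < x0 < x1 ->
  x0 + PI / (2 * (c * root_ratio x0 x1)) < x1 ->
  x1 - x0 > PI / (2 * c) /\
  sqrt ((x1 ^ 2 - 1) / (x1 ^ 2 - x0 ^ 2)) < 2 / PI * c * (x1 - x0).
Proof.
  intros Hc Hx Hgap.
  destruct (root_ratio_bounds x0 x1 Hx) as [Hr0 Hr1].
  set (r := root_ratio x0 x1) in *.
  pose proof PI_RGT_0 as Hpi.
  assert (Hpi_lt : PI < 2 * (c * r) * (x1 - x0)).
  { assert (Hq : PI / (2 * (c * r)) * (2 * (c * r)) = PI) by (field; nra).
    rewrite <- Hq, (Rmult_comm (2 * (c * r))). apply Rmult_lt_compat_r; nra. }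
  split.
  - assert (PI / (2 * c) < PI / (2 * (c * r))).
    { apply Rmult_lt_compat_l; [lra | apply Rinv_lt_contravar; nra]. }
    lra.
  - replace ((x1 ^ 2 - 1) / (x1 ^ 2 - x0 ^ 2)) with (/ ((x1 ^ 2 - x0 ^ 2) / (x1 ^ 2 - 1)))
      by (field; nra).
    rewrite sqrt_inv. fold (root_ratio x0 x1) r.
    apply Rmult_lt_reg_l with (PI * r); [nra|].
    replace (PI * r * / r) with PI by (field; lra).
    replace (PI * r * (2 / PI * c * (x1 - x0))) with (2 * (c * r) * (x1 - x0)) by (field; lra).
    exact Hpi_lt.
Qed.

Lemma quarter_period_phase (w a b : R) : 0 < w -> b <= a + PI / (2 * w) ->
  forall t, a <= t <= b ->
  0 <= w * (t - a) <= PI / 2 /\ (t < b -> w * (t - a) < PI / 2).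
Proof.
  intros Hw Hb t Ht.
  assert (Hwq : w * (PI / (2 * w)) = PI / 2) by (field; lra).
  split; [split | intro Htb].
  - apply Rmult_le_pos; lra.
  - rewrite <- Hwq. apply Rmult_le_compat_l; lra.
  - rewrite <- Hwq. apply Rmult_lt_compat_l; lra.
Qed.

Lemma MVT_is_derive (f f' : R -> R) (a b : R) : a < b ->
  (forall x, is_derive f x (f' x)) -> exists e, a < e < b /\ f b - f a = f' e * (b - a).
Proof.
  intros Hab Hf.
  destruct (MVT_cor2 f f' a b Hab) as [e [He1 He2]].
  - intros x _. apply is_derive_Reals, Hf.
  - exists e. split; assumption.
Qed.

Lemma is_derive_pos_root_left (v : R -> R) (a x d : R) :
  a < x -> is_derive v x d -> 0 < d -> v x = 0 -> exists y, a < y < x /\ v y < 0.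
Proof.
  intros Hax Hd Hpos Hvx. apply is_derive_Reals in Hd.
  destruct (Hd (d / 2) ltac:(lra)) as [del Hdel].
  pose proof (cond_pos del) as Hdel0.
  set (h := - Rmin (del / 2) ((x - a) / 2)).
  assert (Hh : - (del / 2) <= h < 0 /\ - ((x - a) / 2) <= h).
  { pose proof (Rmin_l (del / 2) ((x - a) / 2)). pose proof (Rmin_r (del / 2) ((x - a) / 2)).
    pose proof (Rmin_pos (del / 2) ((x - a) / 2) ltac:(lra) ltac:(lra)). unfold h. lra. }
  assert (Habs : Rabs h < del) by (rewrite Rabs_left; lra).
  specialize (Hdel h ltac:(lra) Habs). rewrite Hvx, Rminus_0_r in Hdel.
  apply Rabs_lt_between in Hdel.
  assert (v (x + h) / h * h = v (x + h)) by (field; lra).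
  exists (x + h). split; [lra | nra].
Qed.

Lemma continuity_nonvanishing_sign (f : R -> R) (a b m y : R) : continuity f ->
  (forall z, a < z < b -> f z <> 0) -> a < m < b -> a < y < b -> 0 < f m * f y.
Proof.
  intros Hf Hnz Hm Hy.
  destruct (Rlt_or_le 0 (f m * f y)) as [|Hle]; [assumption | exfalso].
  destruct (IVT_gen f y m 0 Hf) as [z [Hz Hfz]].
  - unfold Rmin, Rmax. destruct Rle_dec; nra.
  - apply (Hnz z); [|assumption].
    unfold Rmin, Rmax in Hz. destruct Rle_dec; lra.
Qed.

Section ProlateFirstRoot.

Variables (c chi x1 : R) (v v1 v2 : R -> R).
Hypothesis c_gt0 : 0 < c.
Hypothesis chi_gt : c ^ 2 < chi.
Hypothesis x1_gt1 : 1 < x1.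
Hypothesis v_x1 : v x1 = 0.
Hypothesis v_pos : forall y, 1 < y < x1 -> 0 < v y.
Hypothesis v_deriv : forall x, is_derive v x (v1 x).
Hypothesis v1_deriv : forall x, is_derive v1 x (v2 x).
Hypothesis v_ode :
  forall x, (1 - x ^ 2) * v2 x - 2 * x * v1 x + (chi - c ^ 2 * x ^ 2) * v x = 0.

Local Notation x0 := (turning_point c chi).
Local Notation w := (c * root_ratio x0 x1).

Lemma is_derive_prolate_flux (x : R) :
  is_derive (fun t => (t ^ 2 - 1) * v1 t) x ((chi - c ^ 2 * x ^ 2) * v x).
Proof.
  replace ((chi - c ^ 2 * x ^ 2) * v x) with (2 * x * v1 x + (x ^ 2 - 1) * v2 x)
    by (pose proof (v_ode x); lra).
  apply (is_derive_mult (fun t => t ^ 2 - 1) v1 x (2 * x) (v2 x)).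
  - auto_derive; [auto | ring].
  - apply v1_deriv.
  - intros; apply Rmult_comm.
Qed.

Lemma prolate_flux_nonneg (y : R) : 1 < y -> y <= x0 -> y <= x1 -> 0 <= (y ^ 2 - 1) * v1 y.
Proof.
  intros Hy1 Hy0 Hyx.
  destruct (MVT_is_derive _ _ 1 y Hy1 is_derive_prolate_flux) as [e [He Hmvt]].
  cbv beta in Hmvt.
  pose proof (turning_point_sqr c chi c_gt0 ltac:(nra)) as Hx0.
  assert (0 < v e) by (apply v_pos; lra).
  assert (c ^ 2 * e ^ 2 < chi) by (rewrite <- Hx0; apply Rmult_lt_compat_l; nra).
  replace ((y ^ 2 - 1) * v1 y) with ((chi - c ^ 2 * e ^ 2) * v e * (y - 1)) by lra.
  apply Rmult_le_pos; [apply Rmult_le_pos|]; lra.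
Qed.

Lemma turning_point_lt_root : x0 < x1.
Proof.
  destruct (Rlt_or_le x0 x1) as [|Hle]; [assumption | exfalso].
  set (m := (1 + x1) / 2).
  destruct (MVT_is_derive v v1 m x1 ltac:(unfold m; lra) v_deriv) as [e [He Hmvt]].
  assert (0 <= (e ^ 2 - 1) * v1 e) by (apply prolate_flux_nonneg; unfold m in He; lra).
  assert (0 < v m) by (apply v_pos; unfold m; lra).
  assert (0 < e ^ 2 - 1) by (unfold m in He; nra).
  assert (0 <= v1 e) by nra.
  nra.
Qed.

Lemma prolate_deriv_turning_point_nonneg : 0 <= v1 x0.
Proof.
  pose proof (turning_point_gt1 c chi c_gt0 chi_gt).
  pose proof turning_point_lt_root.
  assert (0 <= (x0 ^ 2 - 1) * v1 x0) by (apply prolate_flux_nonneg; lra).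
  apply Rmult_le_reg_l with (x0 ^ 2 - 1); nra.
Qed.

Lemma is_derive_prolate_wronskian (k a t : R) :
  is_derive (fun s => (s ^ 2 - 1) * (v1 s * cos (k * (s - a)) + k * v s * sin (k * (s - a)))) t
    ((chi - c ^ 2 * t ^ 2 + (t ^ 2 - 1) * k ^ 2) * v t * cos (k * (t - a))
     + 2 * t * k * v t * sin (k * (t - a))).
Proof.
  auto_derive.
  - repeat split; eexists; [apply v1_deriv | apply v_deriv].
  - replace (Derive (fun s => v s) t) with (v1 t) by (symmetry; apply is_derive_unique, v_deriv).
    replace (Derive (fun s => v1 s) t) with (v2 t)
      by (symmetry; apply is_derive_unique, v1_deriv).
    replace (t + - a) with (t - a) by ring.
    apply Rminus_diag_uniq.
    transitivity (- cos (k * (t - a))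
      * ((1 - t ^ 2) * v2 t - 2 * t * v1 t + (chi - c ^ 2 * t ^ 2) * v t)); [ring|].
    rewrite v_ode. ring.
Qed.

(* Sturm comparison of v with cos (w (t - x0)) on [x0, x1]. *)
Lemma prolate_deriv_root_pos : x1 <= x0 + PI / (2 * w) -> 0 < v1 x1.
Proof.
  intros Hclose.
  pose proof (turning_point_gt1 c chi c_gt0 chi_gt) as Hx0.
  pose proof turning_point_lt_root as Hx01.
  destruct (root_ratio_bounds x0 x1 ltac:(lra)) as [Hr _].
  pose proof PI_RGT_0 as Hpi.
  assert (Hw : 0 < w) by nra.
  pose proof (quarter_period_phase w x0 x1 Hw Hclose) as Hphase.
  set (W := fun s => (s ^ 2 - 1) * (v1 s * cos (w * (s - x0)) + w * v s * sin (w * (s - x0)))).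
  destruct (MVT_is_derive W _ x0 x1 Hx01 (is_derive_prolate_wronskian w x0)) as [e [He Hmvt]].
  assert (HWe : 0 < (chi - c ^ 2 * e ^ 2 + (e ^ 2 - 1) * w ^ 2) * v e * cos (w * (e - x0))
                    + 2 * e * w * v e * sin (w * (e - x0))).
  { destruct (Hphase e ltac:(lra)) as [Hph Hph_lt].
    pose proof (cos_gt_0 (w * (e - x0)) ltac:(lra) (Hph_lt ltac:(lra))).
    pose proof (sin_gt_0 (w * (e - x0)) ltac:(apply Rmult_lt_0_compat; lra) ltac:(lra)).
    pose proof (v_pos e ltac:(lra)).
    pose proof (comparison_coefficient_nonneg c x0 x1 e ltac:(lra) ltac:(lra)).
    rewrite turning_point_sqr in * by (auto; nra).
    assert (0 <= (chi - c ^ 2 * e ^ 2 + (e ^ 2 - 1) * w ^ 2) * v e * cos (w * (e - x0)))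
      by (apply Rmult_le_pos; [apply Rmult_le_pos|]; lra).
    assert (0 < 2 * e * w * v e * sin (w * (e - x0))) by (repeat apply Rmult_lt_0_compat; lra).
    lra. }
  assert (HWx0 : 0 <= W x0).
  { unfold W. rewrite Rminus_diag, Rmult_0_r, cos_0, sin_0, !Rmult_0_r, Rmult_1_r, Rplus_0_r.
    apply Rmult_le_pos; [nra | exact prolate_deriv_turning_point_nonneg]. }
  assert (HWx1 : W x1 = (x1 ^ 2 - 1) * v1 x1 * cos (w * (x1 - x0)))
    by (unfold W; rewrite v_x1; ring).
  assert (Hcos : 0 <= cos (w * (x1 - x0)))
    by (apply cos_ge_0; destruct (Hphase x1 ltac:(lra)); lra).
  cbv beta in Hmvt.
  assert (0 < W x1) by (pose proof (Rmult_lt_0_compat _ (x1 - x0) HWe ltac:(lra)); lra).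
  rewrite HWx1 in *.
  destruct (Rlt_or_le 0 (v1 x1)) as [|Hle]; [assumption | exfalso].
  assert (Hneg : (x1 ^ 2 - 1) * v1 x1 <= 0).
  { rewrite <- (Rmult_0_r (x1 ^ 2 - 1)). apply Rmult_le_compat_l; nra. }
  pose proof (Rmult_le_compat_r _ _ _ Hcos Hneg). lra.
Qed.

Lemma quarter_period_lt_root : x0 + PI / (2 * w) < x1.
Proof.
  destruct (Rlt_or_le (x0 + PI / (2 * w)) x1) as [|Hclose]; [assumption | exfalso].
  destruct (is_derive_pos_root_left v x0 x1 (v1 x1) turning_point_lt_root (v_deriv x1)
              (prolate_deriv_root_pos Hclose) v_x1) as [y [Hy Hvy]].
  pose proof (turning_point_gt1 c chi c_gt0 chi_gt).
  pose proof (v_pos y ltac:(lra)). lra.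
Qed.

Lemma prolate_first_root_bounds :
  x1 - turning_point c chi > PI / (2 * c) /\
  sqrt ((x1 ^ 2 - 1) / (x1 ^ 2 - chi / c ^ 2)) < 2 / PI * c * (x1 - turning_point c chi).
Proof.
  replace (chi / c ^ 2) with (x0 ^ 2)
    by (rewrite <- (turning_point_sqr c chi) at 2 by (auto; nra); field; lra).
  apply root_bounds_of_quarter_period; [assumption | | exact quarter_period_lt_root].
  split; [apply turning_point_gt1 | apply turning_point_lt_root]; assumption.
Qed.

End ProlateFirstRoot.

Theorem theorem31 (c : R) (psi : nat -> R -> R) (lam : nat -> C) (chi : nat -> R)
  (n : nat) (x1 : R) :
  0 < c ->
  is_PSWF_family c psi lam ->
  (forall k, 0 < chi k) ->
  (forall k, chi k < chi (S k)) ->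
  (forall k, satisfies_prolate_ode c (chi k) (psi k)) ->
  chi n > c ^ 2 ->
  1 < x1 -> psi n x1 = 0 ->
  (forall y, 1 < y < x1 -> psi n y <> 0) ->
  x1 - sqrt (chi n) / c > PI / (2 * c) /\
  sqrt ((x1 ^ 2 - 1) / (x1 ^ 2 - chi n / c ^ 2)) < 2 / PI * c * (x1 - sqrt (chi n) / c).
Proof.
  intros Hc _ _ _ Hode Hchi Hx1 Hroot Hnonzero.
  specialize (Hode n). set (f := psi n) in *.
  assert (Df : forall x, is_derive f x (Derive f x)) by (intro x; apply Derive_correct, Hode).
  assert (DDf : forall x, is_derive (Derive f) x (Derive (Derive f) x))
    by (intro x; apply Derive_correct, Hode).
  assert (Hcont : continuity f).
  { intro x. apply continuity_pt_filterlim, (ex_derive_continuous f). eexists; apply Df. }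
  (* Multiplying by the value at an interior point makes the solution positive on (1, x1). *)
  set (s := f ((1 + x1) / 2)).
  apply (prolate_first_root_bounds c (chi n) x1 (fun x => s * f x) (fun x => s * Derive f x)
           (fun x => s * Derive (Derive f) x)); try assumption.
  - rewrite Hroot. ring.
  - intros y Hy. apply (continuity_nonvanishing_sign f 1 x1); auto; lra.
  - intro x. apply is_derive_scal, Df.
  - intro x. apply is_derive_scal, DDf.
  - intro x. destruct (Hode x) as [_ [_ Hx]].
    change (Derive_n f 2 x) with (Derive (Derive f) x) in Hx.
    transitivity (s * ((1 - x ^ 2) * Derive (Derive f) x - 2 * x * Derive f x
                       + (chi n - c ^ 2 * x ^ 2) * f x)); [ring|].
    rewrite Hx. ring.
Qed.
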